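(* Let $p,q$ be positive integers, $e\in\mathbb{R}^p$ the vector of all ones, and let $(z,w)\in\mathbb{R}^p\times\mathbb{R}^q$ satisfy $z^+\not\ge\|w\|e$ and $\langle z^-,e\rangle<\|w\|$. If $\langle e,|z|\rangle<\|w\|$, then for every $\lambda_0>0$ the sequence given by $$\lambda_{k+1}=\frac{1}{\|w\|}\left\langle e,[(\lambda_k+1)z-\|w\|e]^-\right\rangle,\qquad k=0,1,\ldots,$$ converges to the unique solution of the equation $\lambda\|w\|=\langle e,[(\lambda+1)z-\|w\|e]^-\rangle$.
   Context: For $\alpha\in\mathbb{R}$, $\alpha^+:=\max(\alpha,0)$ and $\alpha^-:=\max(-\alpha,0)$; for vectors, $z^+$, $z^-$ and $|z|$ are taken componentwise. The order $\ge$ is componentwise; $z^+\not\ge\|w\|e$ means that $z^+\ge\|w\|e$ fails. *)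

From mathcomp Require Import all_boot all_order all_algebra.
From mathcomp Require Import all_classical all_reals all_analysis.
Set Implicit Arguments. Unset Strict Implicit. Unset Printing Implicit Defensive.
Import Order.TTheory GRing.Theory Num.Theory.
Local Open Scope ring_scope.

Definition pospart {R : realType} (a : R) : R := Num.max a 0.
Definition negpart {R : realType} (a : R) : R := Num.max (- a) 0.

Definition enorm {R : realType} {q : nat} (w : 'rV[R]_q) : R :=
  Num.sqrt (\sum_(j < q) w 0 j ^+ 2).

(* <e, v> = sum of coordinates, e the all-ones vector *)
Definition sum_e {R : realType} {p : nat} (f : 'I_p -> R) : R :=
  \sum_(i < p) f i.

Definition iter_map {R : realType} {p q : nat} (z : 'rV[R]_p) (w : 'rV[R]_q)
  (lam : R) : R :=
  (enorm w)^-1 * sum_e (fun i => negpart ((lam + 1) * z 0 i - enorm w)).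

Definition lam_seq {R : realType} {p q : nat} (z : 'rV[R]_p) (w : 'rV[R]_q)
  (lam0 : R) (k : nat) : R := iter k (iter_map z w) lam0.

From mathcomp Require Import all_boot all_order all_algebra.
From mathcomp Require Import all_classical all_reals all_analysis.
From mathcomp Require Import ring lra.
Set Implicit Arguments. Unset Strict Implicit. Unset Printing Implicit Defensive.
Import Order.TTheory GRing.Theory Num.Theory.
Import numFieldNormedType.Exports.
Local Open Scope classical_set_scope.
Local Open Scope ring_scope.

(* Every coordinate map lam |-> [(lam + 1) z_i - ||w||]^- is |z_i|-Lipschitz,
   so the map defining the sequence is Lipschitz with constant
   <e, |z|> / ||w||, which is < 1 by hypothesis.  Banach's fixed point theorem
   on the complete space R then gives a unique fixed point and convergence of
   the iterates from any starting point; fixed points of the map are exactly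
   the solutions of the equation. *)

Lemma banach_iter_cvg (R : realType) (X : completeNormedModType R)
    (f : X -> X) (k : R) :
  0 <= k < 1 -> (forall x y, `|f x - f y| <= k * `|x - y|) ->
  forall x0 : X, exists l : X,
    [/\ f l = l, (forall y, f y = y -> y = l) & iter n f x0 @[n --> \oo] --> l].
Proof.
case/andP=> k_ge0 k_lt1 f_lip x0.
pose F : {fun [set: X] >-> [set: X]} := totalfun f.
have F_ctr : contraction (NngNum k_ge0) F by split=> // -[x y] _; exact: f_lip.
have iter_cvg := contraction_cvg F_ctr (I : [set: X] x0).
have fix_l := contraction_cvg_fixed F_ctr (I : [set: X] x0) closedT.
exists (limn (fun n => iter n f x0)); split.
- exact: esym fix_l.
- move=> y fix_y; apply: (@contraction_fixpoint_unique _ _ _ F) => //.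
  by exists (NngNum k_ge0).
- exact: iter_cvg.
Qed.

Lemma negpart_lipschitz (R : realType) (a b : R) :
  `|negpart a - negpart b| <= `|a - b|.
Proof.
have := ler_norm (a - b); have := ler_norm (b - a); rewrite distrC.
rewrite /negpart ler_norml.
by case: (ger0P (- a)) => ha; case: (ger0P (- b)) => hb; lra.
Qed.

Section IterMap.
Variables (R : realType) (p q : nat) (z : 'rV[R]_p) (w : 'rV[R]_q).
Hypothesis w_gt0 : 0 < enorm w.

Lemma iter_map_lipschitz (x y : R) :
  `|iter_map z w x - iter_map z w y|
    <= sum_e (fun i => `|z 0 i|) / enorm w * `|x - y|.
Proof.
rewrite /iter_map -mulrBr normrM gtr0_norm ?invr_gt0 //.
rewrite mulrAC [_ / _]mulrC ler_pM2l ?invr_gt0 // /sum_e -sumrB big_distrl /=.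
apply: (le_trans (ler_norm_sum _ _ _)); apply: ler_sum => i _.
apply: (le_trans (negpart_lipschitz _ _)).
have -> : (x + 1) * z 0 i - enorm w - ((y + 1) * z 0 i - enorm w) = z 0 i * (x - y)
  by ring.
by rewrite normrM.
Qed.

Lemma iter_map_fixedE (l : R) :
  (l * enorm w = sum_e (fun i => negpart ((l + 1) * z 0 i - enorm w)))
    <-> iter_map z w l = l.
Proof.
rewrite /iter_map; split=> fix_l.
- by rewrite -fix_l mulrC mulfK ?gt_eqF.
- by rewrite -[X in X * _]fix_l mulrAC mulVf ?gt_eqF ?mul1r.
Qed.

End IterMap.

Theorem proposition5 (R : realType) (p q : nat) (hp : (0 < p)%N) (hq : (0 < q)%N)
  (z : 'rV[R]_p) (w : 'rV[R]_q)
  (h1 : ~ (forall i : 'I_p, enorm w <= pospart (z 0 i)))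
  (h2 : sum_e (fun i => negpart (z 0 i)) < enorm w)
  (h3 : sum_e (fun i => `|z 0 i|) < enorm w) :
  forall lam0 : R, 0 < lam0 ->
  exists lstar : R,
    [/\ lstar * enorm w = sum_e (fun i => negpart ((lstar + 1) * z 0 i - enorm w)),
        (forall l : R,
           l * enorm w = sum_e (fun i => negpart ((l + 1) * z 0 i - enorm w)) ->
           l = lstar) &
        lam_seq z w lam0 @ \oo --> lstar].
Proof.
move=> lam0 _.
have sum_ge0 : 0 <= sum_e (fun i => `|z 0 i|) by apply: sumr_ge0.
have w_gt0 : 0 < enorm w by apply: le_lt_trans h3.
have k_range : 0 <= sum_e (fun i => `|z 0 i|) / enorm w < 1.
  by rewrite divr_ge0 ?(ltW w_gt0) // ltr_pdivrMr // mul1r.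
have [l [fix_l uniq_l cvg_l]] :=
  banach_iter_cvg k_range (iter_map_lipschitz z w_gt0) lam0.
exists l; split.
- exact/(iter_map_fixedE z w_gt0).
- by move=> l' /(iter_map_fixedE z w_gt0) /uniq_l.
- exact: cvg_l.
Qed.
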